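(* Let $k\ge3$ and let $G,H$ be $2$-connected graphs. Let $u,v\in V(G)$ and $u',v'\in V(H)$ be such that $G-\{u,v\}$ is disconnected and $H-\{u',v'\}$ is connected. Then $\chi^k_G(u,v)\ne\chi^k_H(u',v')$.
   Context: Graphs are finite, simple, undirected (possibly colored). A graph is $2$-connected if it has more than $2$ vertices and removing any one vertex leaves it connected. For $k\ge2$, the $k$-dimensional Weisfeiler–Leman algorithm computes a coloring of $V(G)^k$: the initial color of a tuple consists of its input color and the isomorphism type of the ordered induced subgraph on its entries; in each round the new color of $\bar v$ is the pair of its old color and the multiset, over $w\in V(G)$, of the $k$-tuples whose $i$-th component is the old color of $\bar v$ with its $i$-th entry replaced by $w$; the stable coloring is $\chi^k_G$, with canonical colors comparable across graphs. For $\ell<k$, $\chi^k_G(u_1,\dots,u_\ell):=\chi^k_G(u_1,\dots,u_\ell,u_\ell,\dots,u_\ell)$. *)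

From mathcomp Require Import all_boot.
Set Implicit Arguments. Unset Strict Implicit. Unset Printing Implicit Defensive.

Record graph := Graph {
  vert : finType;
  adj : rel vert;
  gcol : vert -> nat;
  adj_sym : symmetric adj;
  adj_irr : irreflexive adj }.

(* The subgraph induced on S is connected (the empty graph counts as connected;
   "disconnected" = not connected, which then forces at least two vertices). *)
Definition connected_on (G : graph) (S : {set vert G}) : Prop :=
  forall a b, a \in S -> b \in S ->
    connect [rel x y | [&& adj x y, x \in S & y \in S]] a b.

Definition connected_minus (G : graph) (X : {set vert G}) : Prop :=
  connected_on (~: X).

Definition two_connected (G : graph) : Prop :=
  2 < #|vert G| /\ forall x : vert G, connected_minus [set x].

Definition wlcolor := GenTree.tree nat.

(* canonical ordering used to represent multisets as sorted lists *)
Definition col_le : rel wlcolor := fun a b => pickle a <= pickle b.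
Definition mset (s : seq wlcolor) : wlcolor := GenTree.Node 4 (sort col_le s).

Definition ktuple (G : graph) (k : nat) := 'I_k -> vert G.

Definition upd (G : graph) k (t : ktuple G k) (i : 'I_k) (w : vert G) : ktuple G k :=
  fun j => if j == i then w else t j.

(* initial color: input colors of the entries, plus the isomorphism type of
   the ordered induced subgraph (equality and adjacency pattern) *)
Definition wl_init (G : graph) k (t : ktuple G k) : wlcolor :=
  GenTree.Node 0
    [:: GenTree.Node 1 [seq GenTree.Leaf (gcol (t i)) | i <- enum 'I_k];
        GenTree.Node 2 [seq GenTree.Leaf ((t i == t j) + 2 * adj (t i) (t j))
                       | i <- enum 'I_k, j <- enum 'I_k]].

Fixpoint wl (G : graph) k (n : nat) (t : ktuple G k) : wlcolor :=
  match n with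
  | 0 => wl_init t
  | n'.+1 =>
      GenTree.Node 3
        [:: wl n' t;
            mset [seq GenTree.Node 5 [seq wl n' (upd t i w) | i <- enum 'I_k]
                 | w <- enum (vert G)]]
  end.

(* chi^k_G(t) = chi^k_H(t'): the stable colors coincide, i.e. the colors
   agree after every number of rounds. *)
Definition same_stable_color (G H : graph) k (t : ktuple G k) (t' : ktuple H k) : Prop :=
  forall n, wl n t = wl n t'.

Definition pad2 (G : graph) k (u v : vert G) : ktuple G k :=
  fun j => if val j == 0 then u else v.
Arguments pad2 {G} k u v.

From mathcomp Require Import all_boot.
Set Implicit Arguments. Unset Strict Implicit. Unset Printing Implicit Defensive.

(* Let [walks S x y l] count the walks of length l from x to y whose vertices
   after x avoid S.  If a k-tuple lists x, y and the vertices of S, then its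
   colour after n >= l rounds determines this count, provided y has a position
   of its own and x shares none with y: remove the last step of the walks and
   move its endpoint into the position of y.  For k = 3 this does not reach
   walks from a that avoid both u and v; but cutting the walks from a that avoid
   v at their last visit to u expresses their number through walks that avoid v
   only and walks starting at u that avoid u and v, which three positions do
   reach.  Now take a, b in different components of G - {u,v}, match them with
   a', b' through the refinement steps, and compare the counts of walks from a
   to b and from a' to b' of length < |V(H)| avoiding the removed vertices.
   Two-connectivity is only used to get u <> v. *)

Lemma big_perm_map (R : Type) (idx : R) (op : Monoid.com_law idx) (A B C : eqType)
    (F : A -> C) (F' : B -> C) (g : A -> R) (g' : B -> R) (s : seq A) (r : seq B) :
    (forall a b, F a = F' b -> g a = g' b) -> perm_eq (map F s) (map F' r) ->
  \big[op/idx]_(a <- s) g a = \big[op/idx]_(b <- r) g' b.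
Proof.
move=> Fg; elim: s r => [|a s IH] r /=.
  by move/perm_size; rewrite size_map => /esym/size0nil ->; rewrite !big_nil.
move=> Psr; have /mapP[b rb Fab] : F a \in map F' r by rewrite -(perm_mem Psr) mem_head.
rewrite [RHS](perm_big _ (perm_to_rem rb)) !big_cons (Fg _ _ Fab) (IH (rem b r)) //.
by rewrite -(perm_cons (F a)) (perm_trans Psr) // Fab -map_cons perm_map // perm_to_rem.
Qed.

Lemma big_perm_enum_map (R : Type) (idx : R) (op : Monoid.com_law idx) (A B : finType)
    (C : eqType) (F : A -> C) (F' : B -> C) (g : A -> R) (g' : B -> R) :
    (forall a b, F a = F' b -> g a = g' b) ->
    perm_eq (map F (enum A)) (map F' (enum B)) ->
  \big[op/idx]_(a : A) g a = \big[op/idx]_(b : B) g' b.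
Proof. by rewrite [index_enum A]unlock [index_enum B]unlock -!enumT; apply: big_perm_map. Qed.

Lemma imset_set2 (aT rT : finType) (f : aT -> rT) a b : f @: [set a; b] = [set f a; f b].
Proof. by rewrite imsetU1 imset_set1. Qed.

Lemma upd_same (G : graph) k (t : ktuple G k) i w : upd t i w i = w.
Proof. by rewrite /upd eqxx. Qed.

Lemma upd_other (G : graph) k (t : ktuple G k) i j w : j != i -> upd t i w j = t j.
Proof. by rewrite /upd => /negbTE ->. Qed.

Definition ext_colors (G : graph) k (n : nat) (t : ktuple G k) (w : vert G) : seq wlcolor :=
  [seq wl n (upd t i w) | i <- enum 'I_k].

Section WLColors.
Variables (G H : graph) (k : nat).

Lemma wl_eq_le m n (t : ktuple G k) (t' : ktuple H k) :
  m <= n -> wl n t = wl n t' -> wl m t = wl m t'.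
Proof. by move/subnK <-; elim: (n - m) => [//|d IH]; rewrite addSn => -[/IH]. Qed.

Lemma wl_eq_pattern n (t : ktuple G k) (t' : ktuple H k) : wl n t = wl n t' -> forall i j,
  (t i == t j) = (t' i == t' j) /\ adj (t i) (t j) = adj (t' i) (t' j).
Proof.
move=> /(wl_eq_le (leq0n n)) [_ /eq_in_allpairs pattern] i j.
have [] := pattern i j (mem_enum _ i) (mem_enum _ j).
by case: (t i == t j) (t' i == t' j) (adj (t i) (t j)) (adj (t' i) (t' j)) => [] [] [] [].
Qed.

Lemma wl_eq_mem_imset n (t : ktuple G k) (t' : ktuple H k) (P : {set 'I_k}) c :
  wl n t = wl n t' -> (t c \in t @: P) = (t' c \in t' @: P).
Proof.
move=> E; apply/imsetP/imsetP => -[i Pi /eqP].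
  by rewrite (wl_eq_pattern E c i).1 => /eqP ->; exists i.
by rewrite -(wl_eq_pattern E c i).1 => /eqP ->; exists i.
Qed.

Lemma wl_succ_perm n (t : ktuple G k) (t' : ktuple H k) : wl n.+1 t = wl n.+1 t' ->
  perm_eq (map (ext_colors n t) (enum (vert G))) (map (ext_colors n t') (enum (vert H))).
Proof.
case=> _ sortE; apply: (perm_map_inj (f := GenTree.Node 5)) => [? ? [] //|].
by rewrite -!map_comp /comp /ext_colors -!enumT -(perm_sort col_le) sortE perm_sort.
Qed.

Lemma ext_colors_eq n (t : ktuple G k) (t' : ktuple H k) w w' :
  ext_colors n t w = ext_colors n t' w' -> forall i, wl n (upd t i w) = wl n (upd t' i w').
Proof. by move/eq_in_map => E i; apply: E; rewrite mem_enum. Qed.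

Lemma wl_succ_extend n (t : ktuple G k) (t' : ktuple H k) w : wl n.+1 t = wl n.+1 t' ->
  exists w', forall i, wl n (upd t i w) = wl n (upd t' i w').
Proof.
move/wl_succ_perm/perm_mem => P.
have /mapP[w' _ /ext_colors_eq] : ext_colors n t w \in map (ext_colors n t') (enum (vert H)).
  by rewrite -P map_f ?mem_enum.
by exists w'.
Qed.

End WLColors.

Fixpoint walks (G : graph) (S : {set vert G}) (x y : vert G) (l : nat) : nat :=
  if l is l'.+1 then (y \notin S) * \sum_(z : vert G) adj z y * walks S x z l'
  else x == y.

Lemma walks_wl_invariant (G H : graph) k l n (t : ktuple G k) (t' : ktuple H k)
    (P : {set 'I_k}) (a b : 'I_k) :
    b \notin P -> b != a -> l <= n -> wl n t = wl n t' ->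
  walks (t @: P) (t a) (t b) l = walks (t' @: P) (t' a) (t' b) l.
Proof.
move=> bP ba; elim: l n t t' => [|l IH] n t t' ln E.
  by rewrite /= (wl_eq_pattern E a b).1.
case: n ln E => // n ln E /=; rewrite (wl_eq_mem_imset _ _ E); congr (_ * _).
apply: big_perm_enum_map (wl_succ_perm E) => z z' /ext_colors_eq Ez.
have [_ adjE] := wl_eq_pattern (Ez a) a b.
rewrite !upd_same !(upd_other _ _ ba) in adjE; rewrite adjE; congr (_ * _).
have updP (G0 : graph) (s : ktuple G0 k) w : upd s b w @: P = s @: P.
  by apply: eq_in_imset => i Pi; apply: upd_other; apply: contraNneq bP => <-.
have := IH n _ _ ln (Ez b).
by rewrite !updP !upd_same !upd_other // eq_sym.
Qed.

Lemma walks_to_mem (G : graph) (S : {set vert G}) x y l :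
  y \in S -> walks S x y l.+1 = 0.
Proof. by move=> /= ->. Qed.

Lemma walks_last_visit (G : graph) (S : {set vert G}) (u x y : vert G) l :
    u \notin S ->
  walks S x y l =
    walks (u |: S) x y l + \sum_(i < l) walks S x u (l - i) * walks (u |: S) u y i.
Proof.
move=> uS; elim: l y => [|l IH] y; first by rewrite big_ord0 addn0.
rewrite big_ord_recl subn0.
have [->|yu] := eqVneq y u.
  rewrite [walks (u |: S) x u _]walks_to_mem ?setU11 // big1 /= ?eqxx ?muln1 ?addn0 // => i _.
  by rewrite setU11 mul0n muln0.
rewrite (eq_bigr (fun i : 'I_l => walks S x u (l - i) * walks (u |: S) u y i.+1)) => [|i _];
  last by rewrite lift0 subSS.
rewrite /= in_setU1 (negbTE yu) (eq_sym u y) (negbTE yu) muln0 add0n /=.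
under eq_bigr => z _ do rewrite IH mulnDr.
rewrite big_split mulnDr; congr (_ + _).
under eq_bigr => z _ do rewrite big_distrr /=.
rewrite exchange_big big_distrr /=; apply: eq_bigr => i _.
rewrite [RHS]mulnCA; congr (_ * _); rewrite big_distrr /=.
by apply: eq_bigr => z _; rewrite mulnCA.
Qed.

Lemma walks_avoid2_wl_invariant (G H : graph) k n l (t : ktuple G k) (t' : ktuple H k)
    (p0 p1 p2 : 'I_k) (y : vert G) (y' : vert H) :
    p0 != p1 -> p0 != p2 -> p1 != p2 -> t p0 != t p1 -> l <= n -> wl n t = wl n t' ->
    (forall i, wl n (upd t i y) = wl n (upd t' i y')) ->
  walks [set t p0; t p1] (t p2) y l = walks [set t' p0; t' p1] (t' p2) y' l.
Proof.
move=> p01 p02 p12 tp01 ln E Ey.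
have [p10 p20 p21] : [/\ p1 != p0, p2 != p0 & p2 != p1] by rewrite !(eq_sym p2) eq_sym.
have p0_notin : p0 \notin [set p1] by rewrite in_set1.
have p2_notin : p2 \notin [set p0; p1] by rewrite !inE negb_or p20 p21.
have tp01' : t' p0 != t' p1 by rewrite -(wl_eq_pattern E p0 p1).1.
have walks_to_u m : m <= n ->
    walks [set t p1] (t p2) (t p0) m = walks [set t' p1] (t' p2) (t' p0) m.
  move=> mn; have := walks_wl_invariant (a := p2) p0_notin p02 mn E.
  by rewrite !imset_set1.
have walks_from_u m : m <= n ->
    walks [set t p0; t p1] (t p0) y m = walks [set t' p0; t' p1] (t' p0) y' m.
  move=> mn; have := walks_wl_invariant (a := p0) p2_notin p20 mn (Ey p2).
  by rewrite !imset_set2 !upd_same !(upd_other _ _ p02) !(upd_other _ _ p12).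
have := walks_wl_invariant (a := p2) p0_notin p02 ln (Ey p0).
rewrite !imset_set1 !upd_same !(upd_other _ _ p20) !(upd_other _ _ p10).
rewrite (walks_last_visit (u := t p0)) ?in_set1 // (walks_last_visit (u := t' p0)) ?in_set1 //.
rewrite (eq_bigr (fun i : 'I_l => walks [set t' p1] (t' p2) (t' p0) (l - i) *
                                  walks [set t' p0; t' p1] (t' p0) y' i)) => [/addIn //|i _].
have i_n : i <= n := ltnW (leq_trans (ltn_ord i) ln).
have li_n : l - i <= n := leq_trans (leq_subr i l) ln.
by rewrite walks_to_u ?walks_from_u.
Qed.

Section WalksConnect.
Variables (G : graph) (X : {set vert G}).
Let avoid := [rel a b | [&& adj a b, a \in ~: X & b \in ~: X]].

Lemma not_connected_minus : ~ connected_minus X ->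
  exists a b, [/\ a \notin X, b \notin X & ~~ connect avoid a b].
Proof.
move=> nX; have /forallPn[a /forallPn[b]] :
    ~~ [forall a, forall b, (a \in ~: X) ==> (b \in ~: X) ==> connect avoid a b].
  apply/negP => /forallP all_conn; apply: nX => a b aX bX.
  by have /forallP/(_ b) := all_conn a; rewrite aX bX.
by rewrite !negb_imply !in_setC => /and3P[aX bX nab]; exists a, b.
Qed.

Variable x : vert G.
Hypothesis xX : x \notin X.

Lemma walks_gt0_notin y l : 0 < walks X x y l -> y \notin X.
Proof. by case: l => [|l] /=; [rewrite lt0b => /eqP <- | case: (y \in X)]. Qed.

Lemma walks_gt0_connect y l : 0 < walks X x y l -> connect avoid x y.
Proof.
elim: l y => [|l IH] y; first by rewrite /= lt0b => /eqP <-.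
rewrite /= muln_gt0 lt0b => /andP[yX]; rewrite lt0n sum_nat_eq0 => /forallPn[z /=].
rewrite -lt0n muln_gt0 lt0b => /andP[zy xz].
apply: connect_trans (IH _ xz) (connect1 _).
by rewrite /= zy !in_setC yX (walks_gt0_notin xz).
Qed.

Lemma path_walks_gt0 p : path avoid x p -> 0 < walks X x (last x p) (size p).
Proof.
elim/last_ind: p => [|p y IH]; first by rewrite /= eqxx.
rewrite rcons_path last_rcons size_rcons => /andP[/IH walk_p /and3P[zy _]].
rewrite in_setC /= => -> /=; rewrite mul1n (bigD1 (last x p)) //= zy mul1n.
exact: leq_trans walk_p (leq_addr _ _).
Qed.

Lemma connect_walks_gt0 y : connect avoid x y -> exists2 l, l < #|vert G| & 0 < walks X x y l.
Proof.
case/connectP => p /shortenP[p' path_p' uniq_p' _] ->.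
exists (size p'); last exact: path_walks_gt0.
by rewrite cardE; apply: uniq_leq_size uniq_p' _ => z _; rewrite mem_enum.
Qed.

End WalksConnect.

Theorem corollary14 (k : nat) (G H : graph) (u v : vert G) (u' v' : vert H) :
  3 <= k ->
  two_connected G -> two_connected H ->
  ~ connected_minus [set u; v] ->
  connected_minus [set u'; v'] ->
  ~ same_stable_color (pad2 k u v) (pad2 k u' v').
Proof.
case: k => [|[|[|k]]] // _ [_ G_conn1] _ G_disconn H_conn same.
have uv : u != v by apply/eqP => uv; apply: G_disconn; rewrite uv setUid; apply: G_conn1.
have [a [b [aX bX not_ab]]] := not_connected_minus G_disconn.
pose p0 : 'I_k.+3 := ord0; pose p1 : 'I_k.+3 := Ordinal (isT : 1 < k.+3).
pose p2 : 'I_k.+3 := Ordinal (isT : 2 < k.+3).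
pose N := #|vert H|.
have [a' Ea] := wl_succ_extend a (same N.+2).
pose t := upd (pad2 k.+3 u v) p2 a; pose t' := upd (pad2 k.+3 u' v') p2 a'.
have [b' Eb] := wl_succ_extend b (Ea p2 : wl N.+1 t = wl N.+1 t').
have a'X : a' \in ~: [set u'; v'].
  by have := wl_eq_mem_imset [set p0; p1] p2 (Ea p2); rewrite in_setC !imset_set2 /= => <-.
have b'X : b' \in ~: [set u'; v'].
  by have := wl_eq_mem_imset [set p0; p1] p2 (Eb p2); rewrite in_setC !imset_set2 /= => <-.
have [l lN pos_ab'] := connect_walks_gt0 (H_conn a' b' a'X b'X).
have Et : wl N t = wl N t' := wl_eq_le (leqnSn N) (Ea p2).
have walks_ab : walks [set u; v] a b l = walks [set u'; v'] a' b' l.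
  exact: (walks_avoid2_wl_invariant (p0 := p0) (p1 := p1) (p2 := p2)
            isT isT isT uv (ltnW lN) Et Eb).
by move/negP: not_ab; apply; apply: (walks_gt0_connect aX (l := l)); rewrite walks_ab.
Qed.
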